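(* Let $(G,\cdot)$ be a group of nilpotence class (at most) two. For $\psi\in\operatorname{End}(G)$ define $g\circ_\psi h=g\cdot\psi(g)\cdot h\cdot\psi(g)^{-1}$. Then $(\circ_\psi:\psi\in\operatorname{End}(G))$ is a brace block on $G$.
   Context: A skew brace is a triple $(G,\cdot,\circ)$ where $(G,\cdot)$ and $(G,\circ)$ are groups and $g\circ(h\cdot k)=(g\circ h)\cdot g^{-1}\cdot(g\circ k)$ for all $g,h,k$. A bi-skew brace is a triple $(G,\cdot,\circ)$ such that both $(G,\cdot,\circ)$ and $(G,\circ,\cdot)$ are skew braces. A brace block on a set $G$ is a family $\mathcal{F}$ of group operations on $G$ such that $(G,\circ,\diamond)$ is a bi-skew brace for all $\circ,\diamond\in\mathcal{F}$. *)

Set Implicit Arguments.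

Record group := Group {
  carrier :> Type;
  mul : carrier -> carrier -> carrier;
  one : carrier;
  inv : carrier -> carrier;
  mulA : forall x y z, mul x (mul y z) = mul (mul x y) z;
  mul1g : forall x, mul one x = x;
  mulg1 : forall x, mul x one = x;
  mulVg : forall x, mul (inv x) x = one;
  mulgV : forall x, mul x (inv x) = one
}.

Definition commg (G : group) (x y : G) : G :=
  mul G (mul G (inv G x) (inv G y)) (mul G x y).

Definition nil_class_le2 (G : group) : Prop :=
  forall x y z : G, mul G (@commg G x y) z = mul G z (@commg G x y).

Definition is_endo (G : group) (psi : G -> G) : Prop :=
  forall x y : G, psi (mul G x y) = mul G (psi x) (psi y).

Definition circ (G : group) (psi : G -> G) (g h : G) : G :=
  mul G (mul G (mul G g (psi g)) h) (inv G (psi g)).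

Definition is_group_op (T : Type) (op : T -> T -> T) : Prop :=
  (forall x y z, op x (op y z) = op (op x y) z) /\
  exists e : T, (forall x, op e x = x /\ op x e = x) /\
                (forall x, exists y, op x y = e /\ op y x = e).

Definition is_inv_of (T : Type) (op : T -> T -> T) (g gi : T) : Prop :=
  forall x, op (op g gi) x = x /\ op x (op g gi) = x.

Definition skew_brace (T : Type) (dot circ : T -> T -> T) : Prop :=
  is_group_op dot /\ is_group_op circ /\
  forall g h k gi : T, is_inv_of dot g gi ->
    circ g (dot h k) = dot (dot (circ g h) gi) (circ g k).

Definition bi_skew_brace (T : Type) (dot circ : T -> T -> T) : Prop :=
  skew_brace dot circ /\ skew_brace circ dot.

Definition brace_block (T : Type) (I : Type) (F : I -> (T -> T -> T)) : Prop :=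
  (forall i, is_group_op (F i)) /\
  (forall i j, bi_skew_brace (F i) (F j)).

(* In a group of class two the commutator [x, y] is central and bimultiplicative, and
   an endomorphism maps commutators to commutators.  Hence
   g o_psi h = g h [psi g, h]: the product twisted by a central bimultiplicative
   term.  Associativity follows by expanding both sides to g h k [psi g, h]
   [psi g, k] [psi h, k], and the inverse of g is g^-1 [psi g, g].  In the skew
   brace identity the only non-central term is the conjugate g h g^-1 coming from
   the inverse of g, and conjugation is invisible inside commutators, so both
   sides reduce to g h k [psi g, h] [psi g, k] [phi h, k]. *)

From Corelib Require Import ssreflect ssrfun.

Declare Scope group_scope.
Local Open Scope group_scope.
Local Notation "x * y" := (mul _ x y) : group_scope.
Local Notation "x ^-1" := (inv _ x) : group_scope.
Local Notation "1" := (one _) : group_scope.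

(* Locked, so that rewriting with associativity never unfolds a commutator. *)
Definition comm {G : group} (x y : G) : G := locked (commg G x y).

Local Notation "[~ x , y ]" := (comm x y) : group_scope.
Local Notation "g \o_ psi h" := (circ _ psi g h)
  (at level 40, psi at level 0, left associativity) : group_scope.

Section GroupTheory.

Context {G : group}.
Implicit Types x y z : G.

Definition central z := forall y, z * y = y * z.

Lemma mulKg x y : x^-1 * (x * y) = y.
Proof. by rewrite mulA mulVg mul1g. Qed.

Lemma mulKVg x y : x * (x^-1 * y) = y.
Proof. by rewrite mulA mulgV mul1g. Qed.

Lemma mulgK x y : y * x * x^-1 = y.
Proof. by rewrite -mulA mulgV mulg1. Qed.

Lemma mulgKV x y : y * x^-1 * x = y.
Proof. by rewrite -mulA mulVg mulg1. Qed.

Lemma mulgI x y z : x * y = x * z -> y = z.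
Proof. by move=> eq_xy_xz; rewrite -(mulKg x y) eq_xy_xz mulKg. Qed.

Lemma mulg1_eq x y : x * y = 1 -> x^-1 = y.
Proof. by move=> xy1; apply: (mulgI x); rewrite xy1 mulgV. Qed.

Lemma invgK x : x^-1^-1 = x.
Proof. by apply: mulg1_eq; rewrite mulVg. Qed.

Lemma invg1 : (1 : G)^-1 = 1.
Proof. by apply: mulg1_eq; rewrite mul1g. Qed.

Lemma invgM x y : (x * y)^-1 = y^-1 * x^-1.
Proof. by apply: mulg1_eq; rewrite -mulA (mulA _ y) mulgV mul1g mulgV. Qed.

Lemma commE x y : [~ x, y] = commg G x y.
Proof. by rewrite /comm -lock. Qed.

Lemma commgC x y : x * y = y * x * [~ x, y].
Proof. by rewrite !commE /commg -!mulA !mulKVg. Qed.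

Lemma invgR x y : [~ x, y]^-1 = [~ y, x].
Proof. by rewrite !commE /commg !invgM !invgK -!mulA. Qed.

Lemma comm1g x : [~ 1, x] = 1.
Proof. by rewrite !commE /commg invg1 !mul1g mulVg. Qed.

Lemma commg1 x : [~ x, 1] = 1.
Proof. by rewrite !commE /commg invg1 !mulg1 mulVg. Qed.

Lemma central_mulgAC z x y : central z -> x * z * y = x * y * z.
Proof. by move=> cz; rewrite -!mulA cz. Qed.

Section NilClassTwo.

Hypothesis nilG : nil_class_le2 G.

Lemma commg_central x y : central [~ x, y].
Proof. by rewrite commE; apply: nilG. Qed.

Lemma commg_mulgAC x y a b : x * [~ a, b] * y = x * y * [~ a, b].
Proof. exact: central_mulgAC (commg_central a b). Qed.

Lemma commgMl x y z : [~ x * y, z] = [~ x, z] * [~ y, z].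
Proof.
apply: (mulgI (z * (x * y))); rewrite -commgC -mulA (commgC y z) !mulA.
by rewrite (commgC x z) commg_mulgAC -!mulA.
Qed.

Lemma commgMr x y z : [~ x, y * z] = [~ x, y] * [~ x, z].
Proof. by rewrite -invgR commgMl invgM !invgR commg_central. Qed.

Lemma commgVl x y : [~ x^-1, y] = [~ y, x].
Proof.
by rewrite -(invgR x y); symmetry; apply: mulg1_eq; rewrite -commgMl mulgV comm1g.
Qed.

Lemma commgVr x y : [~ x, y^-1] = [~ y, x].
Proof.
by rewrite -(invgR x y); symmetry; apply: mulg1_eq; rewrite -commgMr mulgV commg1.
Qed.

Lemma commgRl a b y : [~ [~ a, b], y] = 1.
Proof.
by apply: (mulgI (y * [~ a, b])); rewrite mulg1 -commgC commg_central.
Qed.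

Lemma commgRr a b y : [~ y, [~ a, b]] = 1.
Proof. by rewrite -invgR commgRl invg1. Qed.

Lemma commg_mulRl x y a b : [~ x * [~ a, b], y] = [~ x, y].
Proof. by rewrite commgMl commgRl mulg1. Qed.

Lemma commg_conjl x y z : [~ x * y * x^-1, z] = [~ y, z].
Proof.
by rewrite !commgMl commgVl -(invgR x z) commg_central -!mulA mulgV mulg1.
Qed.

End NilClassTwo.

Section Endomorphism.

Context {psi : G -> G}.
Hypothesis psiM : is_endo G psi.

Lemma morph1 : psi 1 = 1.
Proof. by apply: (mulgI (psi 1)); rewrite -psiM !mulg1. Qed.

Lemma morphV x : psi x^-1 = (psi x)^-1.
Proof. by symmetry; apply: mulg1_eq; rewrite -psiM mulgV morph1. Qed.

Lemma morphR x y : psi [~ x, y] = [~ psi x, psi y].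
Proof. by rewrite !commE /commg !psiM !morphV. Qed.

End Endomorphism.
End GroupTheory.

Section CircOperation.

Context {G : group}.
Hypothesis nilG : nil_class_le2 G.
Implicit Types g h k x y : G.

Definition circ_inv (psi : G -> G) g := g^-1 * [~ psi g, g].

Section OneEndomorphism.

Context {psi : G -> G}.
Hypothesis psiM : is_endo G psi.

Lemma circE g h : g \o_psi h = g * h * [~ psi g, h].
Proof.
by rewrite /circ -(mulA _ g) (commgC (psi g) h) !mulA (commg_mulgAC nilG) mulgK.
Qed.

Lemma circA g h k : g \o_psi (h \o_psi k) = g \o_psi h \o_psi k.
Proof.
rewrite !circE !psiM (morphR psiM) !(commgMl nilG) !(commgMr nilG).
rewrite (commgRl nilG) (commgRr nilG) !mulg1 !mulA (commg_mulgAC nilG (g * h)).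
by rewrite -!mulA (commg_central nilG (psi h) k) -mulA.
Qed.

Lemma circg1 g : g \o_psi 1 = g.
Proof. by rewrite /circ mulg1 mulgK. Qed.

Lemma circ1g h : 1 \o_psi h = h.
Proof. by rewrite /circ (morph1 psiM) !mul1g invg1 mulg1. Qed.

Lemma circgV g : g \o_psi circ_inv psi g = 1.
Proof.
rewrite circE (commgMr nilG) (commgVr nilG) (commgRr nilG) mulg1 mulKVg.
by rewrite -(invgR (psi g) g) mulgV.
Qed.

Lemma circVg g : circ_inv psi g \o_psi g = 1.
Proof.
rewrite circE psiM (morphV psiM) (morphR psiM) (commgMl nilG) (commgVl nilG).
rewrite (commgRl nilG) mulg1 (commg_mulgAC nilG) mulVg mul1g.
by rewrite -(invgR (psi g) g) mulgV.
Qed.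

Lemma circ_group : is_group_op (circ G psi).
Proof.
split; first exact: circA.
exists 1; split=> [g | g]; first by rewrite circ1g circg1.
by exists (circ_inv psi g); rewrite circgV circVg.
Qed.

Lemma circ_inv_unique g x : g \o_psi x = 1 -> x = circ_inv psi g.
Proof. by move=> gx1; rewrite -(circ1g x) -(circVg g) -circA gx1 circg1. Qed.

Lemma circ_is_inv_of g gi : is_inv_of (circ G psi) g gi -> gi = circ_inv psi g.
Proof. by move=> /(_ 1) [+ _]; rewrite circg1; apply: circ_inv_unique. Qed.

End OneEndomorphism.

Section TwoEndomorphisms.

Variables psi phi : G -> G.
Hypotheses (psiM : is_endo G psi) (phiM : is_endo G phi).

Lemma circ_brace_identity g h k :
  g \o_psi (h \o_phi k) = g \o_psi h \o_phi circ_inv phi g \o_phi (g \o_psi k).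
Proof.
have conj_h : g \o_psi h \o_phi circ_inv phi g = g * h * g^-1 * [~ psi g, h] * [~ g, phi h].
  rewrite /circ_inv !circE.
  rewrite !phiM (morphR phiM) !(commgMl nilG) !(commgMr nilG) !(commgVr nilG).
  rewrite !(commgRr nilG) !mulg1 !mulA -(invgR (phi g) g) mulgK.
  by rewrite (commg_mulgAC nilG).
have comm_conj_h y : [~ phi (g * h * g^-1 * [~ psi g, h] * [~ g, phi h]), y] = [~ phi h, y].
  by rewrite !phiM !(morphR phiM) (morphV phiM) !(commg_mulRl nilG) (commg_conjl nilG).
rewrite conj_h !circE comm_conj_h !(commgMr nilG) !(commgRr nilG) !mulg1 !mulA.
rewrite 2!(commg_mulgAC nilG _ g) mulgKV 2!(commg_mulgAC nilG _ k).
rewrite [in RHS](commg_mulgAC nilG _ [~ psi g, k]) -(invgR g (phi h)) mulgK.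
by rewrite -!mulA (commg_central nilG (phi h) k) -mulA.
Qed.

Lemma circ_skew_brace : skew_brace (circ G phi) (circ G psi).
Proof.
split; first exact: circ_group phiM.
split; first exact: circ_group psiM.
by move=> g h k gi /(circ_is_inv_of phiM) ->; apply: circ_brace_identity.
Qed.

End TwoEndomorphisms.
End CircOperation.

Theorem mainTheorem9 (G : group) (hG : nil_class_le2 G) :
  @brace_block G _ (fun psi : {psi : G -> G | @is_endo G psi} => @circ G (proj1_sig psi)).
Proof.
split=> [[psi psiM] | [psi psiM] [phi phiM]] /=.
- exact: circ_group.
- by split; apply: circ_skew_brace.
Qed.
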